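(* Let $\Omega=A_1\cup\dots\cup A_n$ be a disjoint union of $n$ nonempty sets, let $\mathcal B$ be the $\sigma$-algebra generated by $\{A_1,\dots,A_n\}$, and let $\mu$ be the positive measure on $(\Omega,\mathcal B)$ with $\mu(A_i)=a_i>0$ for $i=1,\dots,n$. Let $\mathcal R=\{v\in\{-1,0,1\}^n:\sum_{i=1}^n v_ia_i=0\}$. Then condition $(\mathcal L)$ uniquely determines $\mu$ (that is, every signed measure $\nu$ on $(\Omega,\mathcal B)$ satisfying $(\mathcal L)$ with respect to $\mu$ is of the form $\nu=\alpha\mu$ for some $\alpha\in\mathbb R$) if and only if the linear span of $\mathcal R$ in $\mathbb R^n$ has dimension $n-1$.
   Context: A signed measure $\nu$ satisfies condition $(\mathcal L)$ with respect to $\mu$ if for all $A,B\in\mathcal B$ with $\mu(A)=\mu(B)\neq\pm\infty$ one has $\nu(A)=\nu(B)\neq\pm\infty$. *)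

From HB Require Import structures.
From mathcomp Require Import all_boot all_order all_algebra.
From mathcomp Require Import all_classical all_reals all_analysis.
Set Implicit Arguments. Unset Strict Implicit. Unset Printing Implicit Defensive.
Import Order.TTheory GRing.Theory Num.Theory.
Import numFieldNormedType.Exports.
Local Open Scope classical_set_scope.
Local Open Scope ring_scope.

Definition condL d (T : measurableType d) (R : realType)
  (mu nu : set T -> \bar R) : Prop :=
  forall A B : set T, measurable A -> measurable B ->
    mu A = mu B -> (mu A != +oo)%E -> (mu A != -oo)%E ->
    [/\ nu A = nu B, (nu A != +oo)%E & (nu A != -oo)%E].

(* Encoding of {-1,0,1}: 0 |-> -1, 1 |-> 0, 2 |-> 1. *)
Definition trit (R : nzRingType) (k : 'I_3) : R := (k%:R - 1)%R.

Definition trit_vectors (R : nzRingType) (n : nat) : seq 'rV[R]_n :=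
  [seq \row_i trit R (f i) | f : {ffun 'I_n -> 'I_3}].

Definition relation_vectors (R : nzRingType) (n : nat) (a : 'I_n -> R)
  : seq 'rV[R]_n :=
  [seq v : 'rV[R]_n <- trit_vectors R n | \sum_(i < n) v ord0 i * a i == 0].

From HB Require Import structures.
From mathcomp Require Import all_boot all_order all_algebra.
From mathcomp Require Import all_classical all_reals all_analysis.
From mathcomp Require Import zify.
Import Order.TTheory GRing.Theory Num.Theory.
Import numFieldNormedType.Exports.
Local Open Scope classical_set_scope.
Local Open Scope ring_scope.
Set Implicit Arguments. Unset Strict Implicit. Unset Printing Implicit Defensive.

(* Every measurable set is a union of atoms A_i, so a charge nu is determined
   by the vector u = (nu (A_i))_i, and every vector arises this way, from a
   combination of Dirac masses at points of the atoms.  Two measurable sets of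
   equal mu-measure differ by a vector v in {-1,0,1}^n with sum_i v_i a_i = 0,
   hence nu satisfies (L) iff u is orthogonal to every such v.  As a itself is
   such a u and is nonzero, (L) forces nu = alpha mu iff the orthogonal
   complement of the span of these v is the line through a, i.e. iff that span
   has dimension n - 1. *)

Section RowSpan.
Variables (F : fieldType) (n : nat).

Lemma memv_span_rows m (A : 'M[F]_(m, n)) u :
  (u \in <<[tuple row i A | i < m]>>%VS) = (u <= A)%MS.
Proof.
apply/idP/idP => [/coord_span ->|/submxP [w ->]].
  by apply: summx_sub => i _; rewrite scalemx_sub // nth_mktuple row_sub.
rewrite mulmx_sum_row; apply: memv_suml => i _; apply/memvZ/memv_span.
by rewrite -(tnth_mktuple (fun i => row i A)) mem_tnth.
Qed.

Lemma dim_span_rows m (A : 'M[F]_(m, n)) :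
  \dim <<[tuple row i A | i < m]>> = \rank A.
Proof.
set B := row_base A.
have -> : <<[tuple row i A | i < m]>>%VS = <<[tuple row i B | i < \rank A]>>%VS.
  by apply/vspaceP => u; rewrite !memv_span_rows eq_row_base.
apply: size_basis; apply/andP; split => //; apply/freeP => k.
have -> : \sum_i k i *: [tuple row i B | i < \rank A]`_i = \row_i k i *m B.
  by rewrite mulmx_sum_row; apply: eq_bigr => i _; rewrite nth_mktuple mxE.
move/eqP; rewrite mulmx_free_eq0 ?row_base_free // => /eqP /rowP k0 i.
by have := k0 i; rewrite !mxE.
Qed.

Lemma dim_span_rank (X : seq 'rV[F]_n) :
  \dim <<X>>%VS = \rank (\matrix_(k < size X) X`_k).
Proof.
rewrite -dim_span_rows; congr (\dim <<_>>%VS).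
apply: (@eq_from_nth _ 0); first by rewrite size_tuple.
by move=> k kX; rewrite (nth_mktuple _ 0 (Ordinal kX)) rowK.
Qed.

Lemma rank_predn_iff_ker_line m (M : 'M[F]_(m, n)) (r : 'rV_n) :
  r != 0 -> M *m r^T = 0 ->
  \rank M = n.-1 <-> forall u : 'rV_n, M *m u^T = 0 -> exists a, u = a *: r.
Proof.
have kerE (u : 'rV_n) : (M *m u^T = 0) <-> (u <= kermx M^T)%MS.
  by rewrite sub_kermx -(inj_eq trmx_inj) trmx_mul trmxK trmx0; exact: rwP eqP.
move=> r0 /kerE rK; have r1 : \rank r = 1%N by rewrite rank_rV r0.
have rkK : \rank (kermx M^T) = (n - \rank M)%N by rewrite mxrank_ker mxrank_tr.
have := mxrankS rK; have := rank_leq_col M; rewrite rkK r1 => rMn rK1.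
split=> [rM u /kerE uK | line].
  have Kr : (kermx M^T <= r)%MS.
    by rewrite -(mxrank_leqif_sup rK).2 rkK r1; apply/eqP; lia.
  by have /sub_rVP [a ->] := submx_trans uK Kr; exists a.
have Kr : (kermx M^T <= r)%MS.
  apply/row_subP => i; have /line [a ->] : M *m (row i (kermx M^T))^T = 0.
    by apply/kerE; rewrite row_sub.
  by apply/sub_rVP; exists a.
have := mxrankS Kr; rewrite rkK r1; lia.
Qed.

Lemma dim_span_predn_iff (X : seq 'rV[F]_n) (r : 'rV_n) :
  r != 0 -> {in X, forall v, v *m r^T = 0} ->
  \dim <<X>>%VS = n.-1 <->
  forall u, {in X, forall v, v *m u^T = 0} -> exists a, u = a *: r.
Proof.
set M := \matrix_(k < size X) X`_k.
have orthoE u : {in X, forall v, v *m u^T = 0} <-> M *m u^T = 0.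
  split=> [uX | Mu v /(nthP 0) [k kX <-]].
    by apply/row_matrixP => k; rewrite row_mul rowK row0 uX ?mem_nth.
  by have := congr1 (row (Ordinal kX)) Mu; rewrite row_mul rowK row0.
move=> r0 /orthoE rM; rewrite dim_span_rank (rank_predn_iff_ker_line r0 rM).
by split=> line u /orthoE /line.
Qed.
End RowSpan.

Lemma mul_tr_row_eq0 (R : comPzRingType) n (v u : 'rV[R]_n) :
  v *m u^T = 0 <-> \sum_i v 0 i * u 0 i = 0.
Proof.
have e : (v *m u^T) 0 0 = \sum_i v 0 i * u 0 i.
  by rewrite !mxE; apply: eq_bigr => i _; rewrite mxE.
split=> [vu | s]; first by rewrite -e vu mxE.
by apply/matrixP => i j; rewrite !ord1 e s mxE.
Qed.

Lemma sum_diff_indicators (R : pzRingType) (I : finType) (p q : pred I)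
    (w : I -> R) :
  \sum_i ((p i)%:R - (q i)%:R) * w i = \sum_(i | p i) w i - \sum_(i | q i) w i.
Proof.
under eq_bigr do rewrite mulrBl.
rewrite sumrB (big_mkcond p) (big_mkcond q).
by congr (_ - _); apply: eq_bigr => i _; case: (_ i); rewrite ?mul1r ?mul0r.
Qed.

Lemma trit_vectorsP (R : nzRingType) n (v : 'rV[R]_n) :
  reflect (exists p q : pred 'I_n, v = \row_i ((p i)%:R - (q i)%:R))
          (v \in trit_vectors R n).
Proof.
apply: (iffP mapP) => [[f _ ->] | [p [q ->]]].
  exists (fun i => val (f i) == 2%N), (fun i => val (f i) == 0%N).
  apply/rowP => i; rewrite !mxE /trit.
  by case: (f i) => -[|[|[|k]]] //= _; rewrite ?subr0 ?sub0r ?subrr // addrK.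
exists [ffun i => inord (1 + p i - q i)]; first by rewrite mem_enum.
apply/rowP => i; rewrite !mxE ffunE /trit.
by case: (p i); case: (q i); rewrite inordK //= ?subr0 ?sub0r ?subrr // addrK.
Qed.

Lemma additive2_bigsetU d (T : ringOfSetsType d) (R : numFieldType)
    (f : set T -> \bar R) (I : eqType) (F : I -> set T) (P : pred I)
    (r : seq I) :
  f set0 = 0%E -> additive2 f -> (forall i, measurable (F i)) ->
  (forall i j, i != j -> F i `&` F j = set0) -> uniq r ->
  f (\big[setU/set0]_(i <- r | P i) F i) = (\sum_(i <- r | P i) f (F i))%E.
Proof.
move=> f0 fU mF dF; elim: r => [|j r IH]; first by rewrite !big_nil.
rewrite cons_uniq => /andP[jr ur]; rewrite !big_cons; case: ifP => Pj //.
  rewrite fU ?IH //; first exact: bigsetU_measurable.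
rewrite big_seq_cond; elim/big_ind: _ => [|S1 S2 e1 e2|i /andP[ir _]].
- exact: setI0.
- by rewrite setIUr e1 e2 setU0.
- by apply: dF; apply: contraNneq jr => ->.
by apply: IH.
Qed.

Section Atoms.
Variables (T : pointedType) (n : nat) (A : 'I_n -> set T).
Hypothesis A_disjoint : forall i j, i != j -> A i `&` A j = set0.
Local Notation T' := (g_sigma_algebraType (range A)).

Lemma measurable_atom i : measurable (A i : set T').
Proof. by apply: sub_sigma_algebra; exists i. Qed.

(* The sets that every atom lies in or misses form a sigma-algebra containing
   the atoms. *)
Lemma atom_sub_or_disjoint (S : set T') i :
  measurable S -> A i `<=` S \/ A i `&` S = set0.
Proof.
move=> mS; apply: (mS [set S | forall i, A i `<=` S \/ A i `&` S = set0]).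
split; last first.
  move=> _ [j _ <-] k.
  by case: (eqVneq k j) => [->|kj]; [left | right; exact: A_disjoint].
split.
- by move=> j; right; rewrite setI0.
- move=> S0 HS j; case: (HS j) => h.
    by right; apply/seteqP; split => y // [Ay [_ nS0y]]; exact: nS0y (h _ Ay).
  left => y Ay; split => // S0y.
  by have : (A j `&` S0) y by []; rewrite h.
- move=> G HG j; case: (pselect (exists k, A j `<=` G k)) => [[k AG]|nAG].
    by left => y Ay; exists k => //; exact: AG.
  right; apply/seteqP; split => y // [Ay [k _ Gky]].
  case: (HG k j) => h; first by apply: nAG; exists k.
  by have : (A j `&` G k) y by []; rewrite h.
Qed.

Lemma atom_subset (S : set T') i y :
  measurable S -> A i y -> S y -> A i `<=` S.
Proof.
move=> mS Aiy Sy; case: (atom_sub_or_disjoint i mS) => // AS0.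
by have : (A i `&` S) y by []; rewrite AS0.
Qed.

Definition atom_union (p : pred 'I_n) : set T' :=
  \bigcup_(i in [set i | p i]) A i.

Lemma atom_union_bigsetU p : atom_union p = \big[setU/set0]_(i | p i) A i.
Proof.
rewrite -bigcup_seq_cond; congr bigcup.
by apply/seteqP; split => i /=; rewrite mem_index_enum.
Qed.

Lemma measurable_atom_union p : measurable (atom_union p).
Proof.
rewrite atom_union_bigsetU; apply: bigsetU_measurable => i _.
exact: measurable_atom.
Qed.

Lemma additive2_atom_union (R : numFieldType) (f : set T' -> \bar R)
    (c : 'I_n -> R) :
  f set0 = 0%E -> additive2 f -> (forall i, f (A i) = (c i)%:E) ->
  forall p, f (atom_union p) = (\sum_(i | p i) c i)%:E.
Proof.
move=> f0 fU fA p; rewrite atom_union_bigsetU additive2_bigsetU //.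
- by rewrite -sumEFin; apply: eq_bigr => i _.
- exact: measurable_atom.
- exact: index_enum_uniq.
Qed.

Hypothesis A_cover : \bigcup_i A i = setT.
Variables (x : 'I_n -> T).
Hypothesis xA : forall i, A i (x i).

Lemma measurable_atom_unionE (S : set T') :
  measurable S -> S = atom_union (fun i => x i \in S).
Proof.
move=> mS; apply/seteqP; split => [y Sy | y [i /= + Aiy]].
  have [i _ Aiy] : (\bigcup_i A i) y by rewrite A_cover.
  by exists i => //=; rewrite inE; exact: atom_subset mS Aiy Sy _ (xA i).
by rewrite inE => xiS; exact: atom_subset mS (xA i) xiS _ Aiy.
Qed.

Lemma mem_atom i j : (x i \in A j) = (i == j).
Proof.
apply/idP/eqP => [/set_mem Ajx | ->]; last exact/mem_set/xA.
apply/eqP; apply: contraT => ij.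
by have : (A i `&` A j) (x i) by []; rewrite A_disjoint.
Qed.

End Atoms.

Section DiracCombination.
Context d (T : measurableType d) (R : realType) (I : Type).
Variables (x : I -> T) (b : I -> R).

Definition dirac_combination (r : seq I) : {charge set T -> \bar R} :=
  foldr (fun i nu => [the {charge set T -> \bar R} of
      cadd (cscale (b i) (charge_of_finite_measure \d_(x i))) nu])
    [the {charge set T -> \bar R} of czero] r.

Lemma dirac_combinationE r S :
  dirac_combination r S = (\sum_(i <- r | x i \in S) b i)%:E.
Proof.
elim: r => [|i r IH]; first by rewrite big_nil.
rewrite big_cons /= /cadd /= IH /cscale.
rewrite [X in (_ * X)%E](_ : _ = ((x i \in S)%:R)%:E); last exact: diracE.
by case: (x i \in S); rewrite ?mule1 ?mule0 ?add0e.
Qed.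

End DiracCombination.

Section ConditionL.
Variables (R : realType) (n : nat) (T : pointedType) (A : 'I_n -> set T).
Local Notation T' := (g_sigma_algebraType (range A)).
Hypothesis A_disjoint : forall i j, i != j -> A i `&` A j = set0.
Hypothesis A_cover : \bigcup_i A i = setT.
Variables (x : 'I_n -> T).
Hypothesis xA : forall i, A i (x i).
Variables (mu : {measure set T' -> \bar R}) (a : 'I_n -> R).
Hypothesis mu_A : forall i, mu (A i) = (a i)%:E.

Definition charge_vector (nu : {charge set T' -> \bar R}) : 'rV[R]_n :=
  \row_i fine (nu (A i)).

Lemma charge_atom (nu : {charge set T' -> \bar R}) i :
  nu (A i) = (charge_vector nu 0 i)%:E.
Proof.
by rewrite mxE fineK //; apply: fin_num_measure; exact: measurable_atom.
Qed.

Lemma measure_atomsE (S : set T') :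
  measurable S -> mu S = (\sum_(i | x i \in S) a i)%:E.
Proof.
move=> mS; rewrite {1}(measurable_atom_unionE A_disjoint A_cover xA mS).
by rewrite (additive2_atom_union A_disjoint (measure0 mu) (measureU mu) mu_A).
Qed.

Lemma charge_atomsE (nu : {charge set T' -> \bar R}) (S : set T') :
  measurable S -> nu S = (\sum_(i | x i \in S) charge_vector nu 0 i)%:E.
Proof.
move=> mS; rewrite {1}(measurable_atom_unionE A_disjoint A_cover xA mS).
by rewrite (additive2_atom_union A_disjoint (charge0 nu) (chargeU nu)
  (charge_atom nu)).
Qed.

Lemma condL_orthogonal (nu : {charge set T' -> \bar R}) :
  condL mu nu ->
  {in relation_vectors a, forall v, v *m (charge_vector nu)^T = 0}.
Proof.
move=> nuL v; rewrite mem_filter => /andP[/eqP va /trit_vectorsP [p [q vE]]].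
have muE := additive2_atom_union A_disjoint (measure0 mu) (measureU mu) mu_A.
have nuE := additive2_atom_union A_disjoint (charge0 nu) (chargeU nu)
  (charge_atom nu).
have sum_pq : \sum_(i | p i) a i = \sum_(i | q i) a i.
  move: va; rewrite vE; under eq_bigr do rewrite mxE.
  by rewrite sum_diff_indicators => /eqP; rewrite subr_eq0 => /eqP.
have mu_pq : mu (atom_union p) = mu (atom_union q) by rewrite !muE sum_pq.
have /andP[p_pinfty p_ninfty] :
    (mu (atom_union p) != +oo)%E && (mu (atom_union p) != -oo)%E.
  by rewrite muE.
have [] := nuL _ _ (measurable_atom_union p) (measurable_atom_union q)
  mu_pq p_pinfty p_ninfty.
rewrite !nuE => e _ _; have nuPQ := EFin_inj e.
apply/mul_tr_row_eq0; rewrite vE; under eq_bigr do rewrite mxE.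
by rewrite sum_diff_indicators nuPQ subrr.
Qed.

Lemma orthogonal_condL (u : 'rV[R]_n) :
  {in relation_vectors a, forall v, v *m u^T = 0} ->
  condL mu (dirac_combination (x : 'I_n -> T') (u 0) (index_enum 'I_n)).
Proof.
move=> uR S1 S2 mS1 mS2; rewrite !measure_atomsE // => e _ _.
rewrite !dirac_combinationE; split => //; congr EFin.
set p := fun i => x i \in S1; set q := fun i => x i \in S2.
have /mul_tr_row_eq0 : (\row_i ((p i)%:R - (q i)%:R)) *m u^T = 0.
  apply: uR; rewrite mem_filter; apply/andP; split; last first.
    by apply/trit_vectorsP; exists p, q.
  apply/eqP; under eq_bigr do rewrite mxE.
  by rewrite sum_diff_indicators (EFin_inj e) subrr.
under eq_bigr do rewrite mxE.
by rewrite sum_diff_indicators => /eqP; rewrite subr_eq0 => /eqP.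
Qed.

End ConditionL.

Theorem proposition4p1 (R : realType) (n : nat) (T : pointedType)
  (A : 'I_n -> set T) (a : 'I_n -> R)
  (n_gt0 : (0 < n)%N)
  (A_nonempty : forall i, A i !=set0)
  (A_disjoint : forall i j, i != j -> A i `&` A j = set0)
  (A_cover : \bigcup_i A i = setT)
  (mu : {measure set (g_sigma_algebraType (range A)) -> \bar R})
  (a_pos : forall i, 0 < a i)
  (mu_A : forall i, mu (A i) = (a i)%:E) :
  (forall nu : {charge set (g_sigma_algebraType (range A)) -> \bar R},
     condL mu nu ->
     exists alpha : R, forall S : set (g_sigma_algebraType (range A)),
       measurable S -> nu S = (alpha%:E * mu S)%E)
  <->
  \dim <<relation_vectors a>>%VS = n.-1.
Proof.
have [x xA] := choice A_nonempty.
set r := \row_i a i.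
have r_neq0 : r != 0.
  apply/eqP => /rowP /(_ (Ordinal n_gt0)); rewrite !mxE => a0.
  by have := a_pos (Ordinal n_gt0); rewrite a0 ltxx.
have r_orth : {in relation_vectors a, forall v, v *m r^T = 0}.
  move=> v; rewrite mem_filter => /andP[/eqP va _]; apply/mul_tr_row_eq0.
  by under eq_bigr do rewrite mxE.
rewrite (dim_span_predn_iff r_neq0 r_orth).
split=> [mu_unique u uR | r_line nu nuL].
- have [al nuE] := mu_unique _ (orthogonal_condL A_disjoint A_cover xA mu_A uR).
  exists al; apply/rowP => j; rewrite !mxE.
  move: (nuE _ (measurable_atom j)); rewrite dirac_combinationE mu_A -EFinM.
  move=> e; rewrite -(EFin_inj e).
  by rewrite (big_pred1 j (mem_atom A_disjoint xA ^~ j)).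
- have [al uE] := r_line _ (condL_orthogonal A_disjoint mu_A nuL).
  exists al => S mS.
  rewrite (charge_atomsE A_disjoint A_cover xA) //.
  rewrite (measure_atomsE A_disjoint A_cover xA mu_A) // -EFinM mulr_sumr.
  by congr EFin; apply: eq_bigr => i _; rewrite uE !mxE.
Qed.
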